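(* Let $G=(U\cup V,E)$ be a bipartite graph, where $U$ and $V$ are disjoint stable sets, such that for every $v\in V$ and every $u\in N(v)$ we have $d(u)<2\,d(v)$. If $d(u)\neq d(v)$ for every edge $(u,v)\in E$, then $\eta(G)=1$; otherwise $\eta(G)=2$.
   Context: All graphs are finite, simple and undirected. For a vertex $v$, $N(v)$ is its set of neighbours and $d(v)=|N(v)|$. For a positive integer $k$, $[k]=\{1,\dots,k\}$. For a labeling $f:V(G)\to[k]$ and $S\subseteq V(G)$, $f(S)=\sum_{u\in S}f(u)$. A labeling $f:V(G)\to[k]$ is an additive $k$-coloring if $f(N(u))\neq f(N(v))$ for every edge $(u,v)$ of $G$. The additive chromatic number $\eta(G)$ is the least $k$ for which $G$ has an additive $k$-coloring. *)

(* A finite simple graph is a symmetric irreflexive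
   relation e on a finite vertex type T. *)
From mathcomp Require Import all_boot.
Set Implicit Arguments. Unset Strict Implicit. Unset Printing Implicit Defensive.

Section AdditiveColoring.
Variable T : finType.
Variable e : rel T.

Definition nbhd (v : T) : {set T} := [set u | e v u].
Definition deg (v : T) : nat := #|nbhd v|.

Definition fsum (f : T -> nat) (S : {set T}) : nat := \sum_(u in S) f u.

Definition additive_coloring (k : nat) (f : T -> nat) : Prop :=
  (forall x, 1 <= f x <= k) /\
  (forall u v, e u v -> fsum f (nbhd u) <> fsum f (nbhd v)).

Definition has_additive_coloring (k : nat) : Prop :=
  exists f : T -> nat, additive_coloring k f.

(* eta_is k  <->  eta(G) = k, i.e. k is the least positive integer for
   which G has an additive k-coloring. *)
Definition eta_is (k : nat) : Prop :=
  0 < k /\ has_additive_coloring k /\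
  (forall k', 0 < k' -> has_additive_coloring k' -> k <= k').
End AdditiveColoring.

From mathcomp Require Import all_boot.

Set Implicit Arguments. Unset Strict Implicit. Unset Printing Implicit Defensive.

(* The constant labeling 1 gives f(N(x)) = d(x), and it is the only
   1-labeling, so eta(G) = 1 exactly when adjacent vertices have distinct
   degrees.  Otherwise label U by 2 and V by 1: a vertex of U then sees sum
   d(u), a vertex of V sees 2 d(v), and d(u) < 2 d(v) separates them. *)

Lemma fsum_nbhd_const (T : finType) (e : rel T) (f : T -> nat) (c : nat) (x : T) :
  (forall y, e x y -> f y = c) -> fsum f (nbhd e x) = deg e x * c.
Proof.
move=> fc; rewrite /fsum /deg -sum_nat_const; apply: eq_bigr => y.
by rewrite inE => /fc.
Qed.

Section EtaBasics.
Variables (T : finType) (e : rel T).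

Lemma has_additive_coloring1P :
  has_additive_coloring e 1 <-> (forall u v, e u v -> deg e u <> deg e v).
Proof.
have fsum1 f : (forall x, f x = 1) -> forall x, fsum f (nbhd e x) = deg e x.
  by move=> f1 x; rewrite (@fsum_nbhd_const _ _ _ 1) ?muln1.
split=> [[f [f_range f_add]] u v euv | deg_neq].
  have f1 x : f x = 1 by apply/eqP; rewrite eqn_leq andbC; apply: f_range.
  by rewrite -!(fsum1 f f1); apply: f_add.
exists (fun=> 1); split=> // u v euv.
by rewrite !(fsum1 (fun=> 1)) //; apply: deg_neq.
Qed.

Lemma eta_is2 :
  ~ has_additive_coloring e 1 -> has_additive_coloring e 2 -> eta_is e 2.
Proof.
move=> no1 has2; split=> //; split=> // k k_gt0.
by case: k k_gt0 => [|[|k]] // _ /no1.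
Qed.

End EtaBasics.

Section Bipartite.
Variables (T : finType) (e : rel T) (U : {set T}).
Hypothesis e_sym : symmetric e.
Hypothesis e_bip : forall x y, e x y -> (x \in U) != (y \in U).
Hypothesis hdeg : forall v u, v \notin U -> e v u -> deg e u < 2 * deg e v.

Definition part_labeling (x : T) : nat := if x \in U then 2 else 1.

Lemma fsum_part_labeling x :
  fsum part_labeling (nbhd e x) = if x \in U then deg e x else deg e x * 2.
Proof.
case xU: (x \in U).
- rewrite (@fsum_nbhd_const _ _ _ 1) ?muln1 // => y exy.
  by have := e_bip exy; rewrite xU /part_labeling; case: (y \in U).
- rewrite (@fsum_nbhd_const _ _ _ 2) // => y exy.
  by have := e_bip exy; rewrite xU /part_labeling; case: (y \in U).
Qed.

Lemma fsum_part_labeling_neq u v :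
  u \in U -> e u v -> fsum part_labeling (nbhd e u) <> fsum part_labeling (nbhd e v).
Proof.
move=> uU euv; have vU : v \notin U by have := e_bip euv; rewrite uU.
rewrite !fsum_part_labeling uU (negbTE vU) mulnC => deg_eq.
by have := hdeg vU (etrans (e_sym v u) euv); rewrite -deg_eq ltnn.
Qed.

Lemma part_labeling_additive : additive_coloring e 2 part_labeling.
Proof.
split=> [x | u v euv]; first by rewrite /part_labeling; case: (x \in U).
case uU: (u \in U); first exact: fsum_part_labeling_neq.
have vU : v \in U by have := e_bip euv; rewrite uU; case: (v \in U).
by move/esym; apply: fsum_part_labeling_neq; rewrite // e_sym.
Qed.

End Bipartite.

Theorem mainTheorem1 (T : finType) (e : rel T) (U : {set T})
  (e_sym : symmetric e) (e_irr : irreflexive e)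
  (* bipartite with parts U and V := ~: U (both stable) *)
  (e_bip : forall x y, e x y -> (x \in U) != (y \in U))
  (* for every v in V and every u in N(v): d(u) < 2 d(v) *)
  (hdeg : forall v u, v \notin U -> e v u -> deg e u < 2 * deg e v) :
  ((forall u v, e u v -> deg e u <> deg e v) -> eta_is e 1) /\
  (~ (forall u v, e u v -> deg e u <> deg e v) -> eta_is e 2).
Proof.
split=> [deg_neq | not_deg_neq].
  by do 2!split=> //; apply/has_additive_coloring1P.
apply: eta_is2; first by move/has_additive_coloring1P.
by exists (part_labeling U); exact: part_labeling_additive e_sym e_bip hdeg.
Qed.
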